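(* Let $(H,\Lambda,\lambda)$ be an integral Hopf algebra in a strict symmetric monoidal category $\mathcal{C}$, with monoid $(\mu,\eta)$, comonoid $(\Delta,\varepsilon)$ and antipode $s$. Put $\beta:=\lambda\circ\mu$, $\gamma:=(s\otimes\mathrm{id}_H)\circ\Delta\circ\Lambda$ and $\gamma':=\Delta\circ\Lambda$. The following are equivalent: (i) $H$ is nondegenerate, i.e. $(\mathrm{id}_H\otimes\beta)\circ(\gamma\otimes\mathrm{id}_H)=\mathrm{id}_H=(\beta\otimes\mathrm{id}_H)\circ(\mathrm{id}_H\otimes\gamma)$; (ii) $\beta$ is a Frobenius form for the monoid $(H,\mu,\eta)$; (iii) $\gamma'$ is a Frobenius form for the comonoid $(H,\Delta,\varepsilon)$. Consequently, if $H$ is nondegenerate then $H$ admits a pre-Hopf-Frobenius algebra structure, i.e. there exist a comonoid $(\delta_g,\varepsilon_g)$ and a monoid $(\mu_r,\eta_r)$ on $H$ such that taking green monoid $(\mu,\eta)$, green comonoid $(\delta_g,\varepsilon_g)$, red monoid $(\mu_r,\eta_r)$, red comonoid $(\Delta,\varepsilon)$ and antipode $s$ gives a pre-Hopf-Frobenius algebra.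
   Context: $\mathcal{C}$ is a strict symmetric monoidal category with unit object $I$ and symmetry $\sigma$. A Hopf algebra $(H,\mu,\eta,\Delta,\varepsilon,s)$: an object $H$ with an associative unital monoid $(\mu\colon H\otimes H\to H,\eta\colon I\to H)$ and a coassociative counital comonoid $(\Delta\colon H\to H\otimes H,\varepsilon\colon H\to I)$ satisfying $\Delta\circ\mu=(\mu\otimes\mu)\circ(\mathrm{id}\otimes\sigma_{H,H}\otimes\mathrm{id})\circ(\Delta\otimes\Delta)$, $\Delta\circ\eta=\eta\otimes\eta$, $\varepsilon\circ\mu=\varepsilon\otimes\varepsilon$, $\varepsilon\circ\eta=\mathrm{id}_I$, and $s\colon H\to H$ with $\mu\circ(s\otimes\mathrm{id})\circ\Delta=\eta\circ\varepsilon=\mu\circ(\mathrm{id}\otimes s)\circ\Delta$. A left cointegral is a point $\Lambda\colon I\to H$ with $\mu\circ(\Lambda\otimes\mathrm{id}_H)=\Lambda\circ\varepsilon$; a right integral is a copoint $\lambda\colon H\to I$ with $(\mathrm{id}_H\otimes\lambda)\circ\Delta=\eta\circ\lambda$; $(H,\Lambda,\lambda)$ is an integral Hopf algebra if moreover $\lambda\circ\Lambda=\mathrm{id}_I$. A Frobenius form for a monoid $(F,\mu,\eta)$ is a morphism $\beta\colon F\otimes F\to I$ with $\beta\circ(\mu\otimes\mathrm{id}_F)=\beta\circ(\mathrm{id}_F\otimes\mu)$ admitting an inverse $\bar\beta\colon I\to F\otimes F$, meaning $(\mathrm{id}_F\otimes\beta)\circ(\bar\beta\otimes\mathrm{id}_F)=\mathrm{id}_F=(\beta\otimes\mathrm{id}_F)\circ(\mathrm{id}_F\otimes\bar\beta)$.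 Dually, a Frobenius form for a comonoid $(F,\Delta,\varepsilon)$ is a morphism $\gamma\colon I\to F\otimes F$ with $(\Delta\otimes\mathrm{id}_F)\circ\gamma=(\mathrm{id}_F\otimes\Delta)\circ\gamma$ admitting an inverse $\bar\gamma\colon F\otimes F\to I$ satisfying the same two equations with the roles of $\gamma,\bar\gamma$ as cap and cup. A Frobenius algebra is a monoid $(m,u)$ and comonoid $(d,c)$ on the same object with $(\mathrm{id}\otimes m)\circ(d\otimes\mathrm{id})=d\circ m=(m\otimes\mathrm{id})\circ(\mathrm{id}\otimes d)$. A pre-Hopf-Frobenius algebra consists of an object $H$ with a green monoid $(\mu_g,\eta_g)$, green comonoid $(\delta_g,\varepsilon_g)$, red monoid $(\mu_r,\eta_r)$, red comonoid $(\delta_r,\varepsilon_r)$ and an endomorphism $s$ such that $(\mu_g,\eta_g,\delta_g,\varepsilon_g)$ and $(\mu_r,\eta_r,\delta_r,\varepsilon_r)$ are Frobenius algebras and $(\mu_g,\eta_g,\delta_r,\varepsilon_r,s)$ is a Hopf algebra. *)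

(* Strictness is expressed by equalities of objects
   ((A*B)*C = A*(B*C), I*A = A, A*I = A) and the corresponding equalities
   of morphisms up to transport ([castm]) along these object equalities. *)

Set Implicit Arguments.
Set Universe Polymorphism.

Definition castm {Ob : Type} {hom : Ob -> Ob -> Type} {A A' B B' : Ob}
  (e1 : A = A') (e2 : B = B') (f : hom A B) : hom A' B' :=
  match e1 in _ = A0, e2 in _ = B0 return hom A0 B0 with
  | eq_refl, eq_refl => f
  end.

Record SSMC := {
  ob : Type;
  hom : ob -> ob -> Type;
  comp : forall A B C : ob, hom B C -> hom A B -> hom A C;
  idm : forall A : ob, hom A A;
  tens : ob -> ob -> ob;
  tensm : forall A B C D : ob, hom A B -> hom C D -> hom (tens A C) (tens B D);
  unit : ob;
  sym : forall A B : ob, hom (tens A B) (tens B A);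
  comp_assoc : forall A B C D (f : hom A B) (g : hom B C) (h : hom C D),
      comp h (comp g f) = comp (comp h g) f;
  comp_idl : forall A B (f : hom A B), comp (idm B) f = f;
  comp_idr : forall A B (f : hom A B), comp f (idm A) = f;
  tensm_id : forall A B, tensm (idm A) (idm B) = idm (tens A B);
  tensm_comp : forall A B C A' B' C' (f : hom A B) (g : hom B C)
      (f' : hom A' B') (g' : hom B' C'),
      tensm (comp g f) (comp g' f') = comp (tensm g g') (tensm f f');
  tens_assoc : forall A B C, tens (tens A B) C = tens A (tens B C);
  tens_unitl : forall A, tens unit A = A;
  tens_unitr : forall A, tens A unit = A;
  tensm_assoc : forall A B C D E F (f : hom A B) (g : hom C D) (h : hom E F),
      castm (tens_assoc A C E) (tens_assoc B D F) (tensm (tensm f g) h)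
      = tensm f (tensm g h);
  tensm_unitl : forall A B (f : hom A B),
      castm (tens_unitl A) (tens_unitl B) (tensm (idm unit) f) = f;
  tensm_unitr : forall A B (f : hom A B),
      castm (tens_unitr A) (tens_unitr B) (tensm f (idm unit)) = f;
  sym_nat : forall A B C D (f : hom A B) (g : hom C D),
      comp (sym B D) (tensm f g) = comp (tensm g f) (sym A C);
  sym_inv : forall A B, comp (sym B A) (sym A B) = idm (tens A B);
  sym_hex : forall A B C,
      castm (hom := hom) (tens_assoc A B C) (@eq_refl _ (tens C (tens A B))) (sym (tens A B) C)
      = castm (hom := hom) (@eq_refl _ (tens A (tens B C))) (tens_assoc C A B)
          (comp (castm (hom := hom) (tens_assoc A C B) (@eq_refl _ (tens (tens C A) B))
                   (tensm (sym A C) (idm B)))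
                (tensm (idm A) (sym B C)))
}.

Arguments comp {s A B C} _ _.
Arguments idm {s} A.
Arguments tens {s} _ _.
Arguments tensm {s A B C D} _ _.
Arguments unit {s}.
Arguments sym {s} A B.
Arguments tens_assoc {s} A B C.
Arguments tens_unitl {s} A.
Arguments tens_unitr {s} A.

Section Algebra.
Context {C : SSMC}.
Local Notation hom := (hom C).
Local Notation "X ⊗ Y" := (tens X Y) (at level 40, left associativity).
Local Notation I := (@unit C).

Definition e4 (X : ob C) : (X ⊗ X) ⊗ (X ⊗ X) = X ⊗ ((X ⊗ X) ⊗ X) :=
  eq_trans (tens_assoc X X (X ⊗ X)) (f_equal (tens X) (eq_sym (tens_assoc X X X))).

Definition mid_swap (X : ob C) : hom ((X ⊗ X) ⊗ (X ⊗ X)) ((X ⊗ X) ⊗ (X ⊗ X)) :=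
  castm (eq_sym (e4 X)) (eq_sym (e4 X)) (tensm (idm X) (tensm (sym X X) (idm X))).

Definition is_monoid {X : ob C} (mu : hom (X ⊗ X) X) (eta : hom I X) : Prop :=
  castm (tens_assoc X X X) eq_refl (comp mu (tensm mu (idm X)))
    = comp mu (tensm (idm X) mu)
  /\ castm (tens_unitl X) eq_refl (comp mu (tensm eta (idm X))) = idm X
  /\ castm (tens_unitr X) eq_refl (comp mu (tensm (idm X) eta)) = idm X.

Definition is_comonoid {X : ob C} (d : hom X (X ⊗ X)) (e : hom X I) : Prop :=
  castm eq_refl (tens_assoc X X X) (comp (tensm d (idm X)) d)
    = comp (tensm (idm X) d) d
  /\ castm eq_refl (tens_unitl X) (comp (tensm e (idm X)) d) = idm X
  /\ castm eq_refl (tens_unitr X) (comp (tensm (idm X) e) d) = idm X.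

Definition is_hopf {X : ob C} (mu : hom (X ⊗ X) X) (eta : hom I X)
    (d : hom X (X ⊗ X)) (e : hom X I) (s : hom X X) : Prop :=
  is_monoid mu eta /\ is_comonoid d e
  /\ comp d mu = comp (tensm mu mu) (comp (mid_swap X) (tensm d d))
  /\ comp d eta = castm (tens_unitl I) eq_refl (tensm eta eta)
  /\ comp e mu = castm eq_refl (tens_unitl I) (tensm e e)
  /\ comp e eta = idm I
  /\ comp mu (comp (tensm s (idm X)) d) = comp eta e
  /\ comp mu (comp (tensm (idm X) s) d) = comp eta e.

Definition left_cointegral {X : ob C} (mu : hom (X ⊗ X) X) (e : hom X I)
    (Lam : hom I X) : Prop :=
  castm (tens_unitl X) eq_refl (comp mu (tensm Lam (idm X))) = comp Lam e.

Definition right_integral {X : ob C} (eta : hom I X) (d : hom X (X ⊗ X))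
    (lam : hom X I) : Prop :=
  castm eq_refl (tens_unitr X) (comp (tensm (idm X) lam) d) = comp eta lam.

Definition snake {X : ob C} (cap : hom (X ⊗ X) I) (cup : hom I (X ⊗ X)) : Prop :=
  castm (tens_unitl X) (tens_unitr X)
    (comp (tensm (idm X) cap) (castm eq_refl (tens_assoc X X X) (tensm cup (idm X))))
    = idm X
  /\ castm (tens_unitr X) (tens_unitl X)
    (comp (tensm cap (idm X)) (castm eq_refl (eq_sym (tens_assoc X X X)) (tensm (idm X) cup)))
    = idm X.

Definition frobenius_form_monoid {X : ob C} (mu : hom (X ⊗ X) X)
    (beta : hom (X ⊗ X) I) : Prop :=
  castm (tens_assoc X X X) eq_refl (comp beta (tensm mu (idm X)))
    = comp beta (tensm (idm X) mu)
  /\ exists betabar : hom I (X ⊗ X), snake beta betabar.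

Definition frobenius_form_comonoid {X : ob C} (d : hom X (X ⊗ X))
    (gamma : hom I (X ⊗ X)) : Prop :=
  castm eq_refl (tens_assoc X X X) (comp (tensm d (idm X)) gamma)
    = comp (tensm (idm X) d) gamma
  /\ exists gammabar : hom (X ⊗ X) I, snake gammabar gamma.

Definition is_frobenius_algebra {X : ob C} (m : hom (X ⊗ X) X) (u : hom I X)
    (d : hom X (X ⊗ X)) (c : hom X I) : Prop :=
  is_monoid m u /\ is_comonoid d c
  /\ comp (tensm (idm X) m) (castm eq_refl (tens_assoc X X X) (tensm d (idm X)))
       = comp d m
  /\ comp (tensm m (idm X)) (castm eq_refl (eq_sym (tens_assoc X X X)) (tensm (idm X) d))
       = comp d m.

Definition is_pre_hopf_frobenius {X : ob C}
    (mu_g : hom (X ⊗ X) X) (eta_g : hom I X) (d_g : hom X (X ⊗ X)) (e_g : hom X I)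
    (mu_r : hom (X ⊗ X) X) (eta_r : hom I X) (d_r : hom X (X ⊗ X)) (e_r : hom X I)
    (s : hom X X) : Prop :=
  is_frobenius_algebra mu_g eta_g d_g e_g
  /\ is_frobenius_algebra mu_r eta_r d_r e_r
  /\ is_hopf mu_g eta_g d_r e_r s.

End Algebra.

(* Let Λ and λ be the cointegral and the integral.  The map
   [sinv x = Λ_(1) λ(Λ_(2) x)] is a two-sided inverse of the antipode s: the
   Hopf, integral and cointegral equations together with λΛ = 1 reduce
   [s ∘ sinv] and [sinv ∘ s] to the identity.  As [(1 ⊗ β)(γ ⊗ 1) = s ∘ sinv],
   one of the two zigzag equations of nondegeneracy holds unconditionally.
   Since β is associative, (ii) says that β has some inverse; an inverse
   satisfying one zigzag equation is unique, so it is γ, whence (i) <-> (ii).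
   Precomposing with the invertible s carries the pair (β, γ) to
   (β ∘ (1 ⊗ s), γ'), and back with [sinv], whence (ii) <-> (iii).  Finally a
   monoid with a Frobenius form (β, β̄) is a Frobenius algebra for the
   comultiplication (μ ⊗ 1)(1 ⊗ β̄) and the counit β(1 ⊗ η), and dually for a
   comonoid with a Frobenius form; applied to (β, γ) and to γ' with its
   inverse, this gives the two Frobenius algebras of a pre-Hopf-Frobenius
   structure. *)

From Stdlib Require Import PeanoNat Eqdep StrictProp Setoid ssreflect.

Set Implicit Arguments.
Unset Strict Implicit.

(* Equations between arities live in SProp: all their proofs are
   definitionally equal, so the canonical proof used by the notation
   [f ⊗ g] below is interchangeable with any other one. *)
Definition SEq (a b : nat) : SProp := if Nat.eqb a b then sUnit else sEmpty.

Lemma SEq_eq {a b : nat} : SEq a b -> a = b.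
Proof.
  rewrite /SEq; case E: (Nat.eqb a b) => h; last by case: h.
  exact/Nat.eqb_eq.
Qed.

Fixpoint SEq_refl (n : nat) : SEq n n :=
  match n return SEq n n with 0 => stt | S k => SEq_refl k end.

Definition eq_SEq {a b : nat} (e : a = b) : SEq a b :=
  match e in _ = y return SEq a y with eq_refl => SEq_refl a end.

Definition SEq_assoc_r {a c ac e ace : nat} (p1 : SEq (a + c) ac) (p2 : SEq (ac + e) ace) :
  SEq (a + (c + e)) ace :=
  eq_SEq (eq_trans (Nat.add_assoc a c e)
            (eq_trans (f_equal (fun x => x + e) (SEq_eq p1)) (SEq_eq p2))).

Definition SEq_assoc_l {a c e ce ace : nat} (p3 : SEq (c + e) ce) (p4 : SEq (a + ce) ace) :
  SEq ((a + c) + e) ace :=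
  eq_SEq (eq_trans (eq_sym (Nat.add_assoc a c e))
            (eq_trans (f_equal (fun x => a + x) (SEq_eq p3)) (SEq_eq p4))).

Definition SEq_add0l (a : nat) : SEq (0 + a) a := SEq_refl a.
Definition SEq_add0r (a : nat) : SEq (a + 0) a := eq_SEq (Nat.add_0_r a).

(* A PRO: a strict monoidal category whose objects are the natural numbers,
   with tensor given by addition.  The tensor powers of H form one, and
   computing there avoids transport along the object equalities of [SSMC]. *)
Record PRO := {
  arr :> nat -> nat -> Type;
  pcomp : forall {a b c}, arr b c -> arr a b -> arr a c;
  pid : forall a, arr a a;
  ptens : forall {a b c d ac bd}, SEq (a + c) ac -> SEq (b + d) bd ->
    arr a b -> arr c d -> arr ac bd;
  pcomp_assoc : forall a b c d (f : arr a b) (g : arr b c) (h : arr c d),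
    pcomp h (pcomp g f) = pcomp (pcomp h g) f;
  pcomp_idl : forall a b (f : arr a b), pcomp (pid b) f = f;
  pcomp_idr : forall a b (f : arr a b), pcomp f (pid a) = f;
  ptens_id : forall a c ac (p q : SEq (a + c) ac), ptens p q (pid a) (pid c) = pid ac;
  ptens_comp : forall a b c a' b' c' ac bd ce (p : SEq (a + a') ac) (q : SEq (c + c') ce)
    (r : SEq (b + b') bd) (f : arr a b) (g : arr b c) (f' : arr a' b') (g' : arr b' c'),
    ptens p q (pcomp g f) (pcomp g' f') = pcomp (ptens r q g g') (ptens p r f f');
  ptens_assoc : forall a b c d e f ac bd ace bdf ce df
    (x : arr a b) (y : arr c d) (z : arr e f)
    (p1 : SEq (a + c) ac) (q1 : SEq (b + d) bd) (p2 : SEq (ac + e) ace) (q2 : SEq (bd + f) bdf)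
    (p3 : SEq (c + e) ce) (q3 : SEq (d + f) df) (p4 : SEq (a + ce) ace) (q4 : SEq (b + df) bdf),
    ptens p2 q2 (ptens p1 q1 x y) z = ptens p4 q4 x (ptens p3 q3 y z);
  ptens_unitl : forall a b (p : SEq (0 + a) a) (q : SEq (0 + b) b) (f : arr a b),
    ptens p q (pid 0) f = f;
  ptens_unitr : forall a b (p : SEq (a + 0) a) (q : SEq (b + 0) b) (f : arr a b),
    ptens p q f (pid 0) = f
}.
Arguments pcomp {_ a b c} _ _.
Arguments pid {_} a.
Arguments ptens {_ a b c d ac bd} _ _ _ _.
Arguments pcomp_assoc {_ a b c d} f g h.
Arguments pcomp_idl {_ a b} f.
Arguments pcomp_idr {_ a b} f.
Arguments ptens_id {_ a c ac} _ _.
Arguments ptens_comp {_ a b c a' b' c' ac bd ce} _ _ _ f g f' g'.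
Arguments ptens_unitl {_ a b} _ _ f.
Arguments ptens_unitr {_ a b} _ _ f.

Notation "g ∘ f" := (pcomp g f) (at level 40, left associativity).
Notation "f ⊗ g" := (ptens (SEq_refl _) (SEq_refl _) f g) (at level 34, left associativity).
Notation "'𝟙' n" := (pid n) (at level 0, n at level 0).

Section PROTheory.
Variable W : PRO.

Lemma ptens_assoc_r a b c d e f ac bd ace bdf (x : W a b) (y : W c d) (z : W e f)
    (p1 : SEq (a + c) ac) (q1 : SEq (b + d) bd) (p2 : SEq (ac + e) ace) (q2 : SEq (bd + f) bdf) :
  ptens p2 q2 (ptens p1 q1 x y) z = ptens (SEq_assoc_r p1 p2) (SEq_assoc_r q1 q2) x (y ⊗ z).
Proof. exact: ptens_assoc. Qed.

Lemma ptens_assoc_l a b c d e f ace bdf ce df (x : W a b) (y : W c d) (z : W e f)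
    (p3 : SEq (c + e) ce) (q3 : SEq (d + f) df) (p4 : SEq (a + ce) ace) (q4 : SEq (b + df) bdf) :
  ptens p4 q4 x (ptens p3 q3 y z) = ptens (SEq_assoc_l p3 p4) (SEq_assoc_l q3 q4) (x ⊗ y) z.
Proof. symmetry; exact: ptens_assoc. Qed.

Lemma ptens_comp_split a b c a' b' c' ac ce (p : SEq (a + a') ac) (q : SEq (c + c') ce)
    (f : W a b) (g : W b c) (f' : W a' b') (g' : W b' c') :
  ptens p q (g ∘ f) (g' ∘ f') = ptens (SEq_refl _) q g g' ∘ ptens p (SEq_refl _) f f'.
Proof. exact: ptens_comp. Qed.

Lemma ptens_comp_merge a b c a' b' c' ac bd ce (p : SEq (a + a') ac) (q : SEq (c + c') ce)
    (r r' : SEq (b + b') bd) (f : W a b) (g : W b c) (f' : W a' b') (g' : W b' c') :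
  ptens r q g g' ∘ ptens p r' f f' = ptens p q (g ∘ f) (g' ∘ f').
Proof. symmetry; exact: ptens_comp. Qed.

Lemma ptens_right_first a b c d ac bd (p : SEq (a + c) ac) (q : SEq (b + d) bd)
    (f : W a b) (g : W c d) :
  ptens p q f g = ptens (SEq_refl _) q f (𝟙 d) ∘ ptens p (SEq_refl _) (𝟙 a) g.
Proof. by rewrite ptens_comp_merge pcomp_idl pcomp_idr. Qed.

Lemma ptens_id_comp a b c a' ac bd (p : SEq (a' + a) ac) (q : SEq (a' + c) bd)
    (f : W a b) (g : W b c) :
  ptens p q (𝟙 a') (g ∘ f) = ptens (SEq_refl _) q (𝟙 a') g ∘ ptens p (SEq_refl _) (𝟙 a') f.
Proof. by rewrite ptens_comp_merge pcomp_idl. Qed.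

Lemma ptens_comp_id a b c a' ac bd (p : SEq (a + a') ac) (q : SEq (c + a') bd)
    (f : W a b) (g : W b c) :
  ptens p q (g ∘ f) (𝟙 a') = ptens (SEq_refl _) q g (𝟙 a') ∘ ptens p (SEq_refl _) f (𝟙 a').
Proof. by rewrite ptens_comp_merge pcomp_idl. Qed.

Lemma ptens_split_comp_r a b c a' b' ac bd (p : SEq (a + a') ac) (q : SEq (b + c) bd)
    (f : W a b) (g : W b' c) (h : W a' b') :
  ptens p q f (g ∘ h) = ptens (SEq_refl _) q f g ∘ ptens p (SEq_refl _) (𝟙 a) h.
Proof. by rewrite ptens_comp_merge pcomp_idr. Qed.

Lemma pid_split a c : @pid W (a + c) = 𝟙 a ⊗ 𝟙 c.
Proof. by rewrite ptens_id. Qed.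

Lemma pid_split_to a c n (p : SEq (a + c) n) : @pid W n = ptens p p (𝟙 a) (𝟙 c).
Proof. by rewrite ptens_id. Qed.

Lemma ptens_unitr_intro a b (f : W a b) : f = ptens (SEq_add0r a) (SEq_add0r b) f (𝟙 0).
Proof. by rewrite ptens_unitr. Qed.

Lemma ptens_unitl_intro a b (f : W a b) : f = ptens (SEq_add0l a) (SEq_add0l b) (𝟙 0) f.
Proof. by rewrite ptens_unitl. Qed.

Lemma interchange a b c d ac bc bd (p : SEq (a + c) ac) (q : SEq (b + d) bd)
    (r r' : SEq (b + c) bc) (f : W a b) (g : W c d) :
  ptens r q (𝟙 b) g ∘ ptens p r' f (𝟙 c)
  = ptens (SEq_refl _) q f (𝟙 d) ∘ ptens p (SEq_refl _) (𝟙 a) g.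
Proof. by rewrite !ptens_comp_merge !pcomp_idl !pcomp_idr. Qed.

Lemma interchange_sym a b c d ac bc bd (p : SEq (a + c) ac) (q : SEq (b + d) bd)
    (r r' : SEq (a + d) bc) (f : W a b) (g : W c d) :
  ptens r q f (𝟙 d) ∘ ptens p r' (𝟙 a) g
  = ptens (SEq_refl _) q (𝟙 b) g ∘ ptens p (SEq_refl _) f (𝟙 c).
Proof. by rewrite !ptens_comp_merge !pcomp_idl !pcomp_idr. Qed.

Lemma interchange_effect a b c ac bc (f : W a b) (X : W c 0) (p : SEq (a + c) ac)
    (r r' : SEq (b + c) bc) (q : SEq (b + 0) b) :
  ptens r q (𝟙 b) X ∘ ptens p r' f (𝟙 c) = f ∘ ptens p (SEq_add0r a) (𝟙 a) X.
Proof.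
  rewrite ptens_comp_merge pcomp_idl pcomp_idr -{2}(ptens_unitr (SEq_add0r a) q f).
  by rewrite ptens_comp_merge pcomp_idr pcomp_idl.
Qed.

Lemma interchange_state a b c ac bc (f : W a b) (X : W 0 c) (p : SEq (a + 0) a)
    (r r' : SEq (a + c) ac) (q : SEq (b + c) bc) :
  ptens r q f (𝟙 c) ∘ ptens p r' (𝟙 a) X = ptens (SEq_add0r b) q (𝟙 b) X ∘ f.
Proof.
  rewrite ptens_comp_merge pcomp_idl pcomp_idr -{2}(ptens_unitr p (SEq_add0r b) f).
  by rewrite ptens_comp_merge pcomp_idr pcomp_idl.
Qed.

Lemma interchange_state_l b c d bc bd (f : W 0 b) (X : W c d) (p : SEq (0 + c) c)
    (r : SEq (b + c) bc) (q : SEq (b + d) bd) :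
  ptens r q (𝟙 b) X ∘ ptens p r f (𝟙 c) = ptens (SEq_add0l d) q f (𝟙 d) ∘ X.
Proof.
  rewrite ptens_comp_merge pcomp_idl pcomp_idr -{2}(ptens_unitl p (SEq_add0l d) X).
  by rewrite ptens_comp_merge pcomp_idr pcomp_idl.
Qed.

Lemma states_commute b d bd (f : W 0 b) (g : W 0 d) (q : SEq (b + d) bd) (p : SEq (0 + d) d) :
  ptens p q f (𝟙 d) ∘ g = ptens (SEq_add0r b) q (𝟙 b) g ∘ f.
Proof.
  rewrite {1}(ptens_unitl_intro g) {2}(ptens_unitr_intro f) !ptens_comp_merge.
  by rewrite !pcomp_idl !pcomp_idr.
Qed.

Definition zigzagL (c : W 2 0) (u : W 0 2) := (𝟙 1 ⊗ c) ∘ (u ⊗ 𝟙 1) = 𝟙 1.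
Definition zigzagR (c : W 2 0) (u : W 0 2) := (c ⊗ 𝟙 1) ∘ (𝟙 1 ⊗ u) = 𝟙 1.
Definition zigzag (c : W 2 0) (u : W 0 2) := zigzagL c u /\ zigzagR c u.

Lemma cup_unique (c : W 2 0) (u u' : W 0 2) : zigzagR c u -> zigzagL c u' -> u' = u.
Proof.
  rewrite /zigzagR /zigzagL => hR hL.
  transitivity ((𝟙 1 ⊗ ((c ⊗ 𝟙 1) ∘ (𝟙 1 ⊗ u))) ∘ u').
    by rewrite hR ptens_id pcomp_idl.
  rewrite ptens_id_comp -pcomp_assoc.
  have -> : (𝟙 1 ⊗ (𝟙 1 ⊗ u)) ∘ u' = ((u' ⊗ 𝟙 1) ⊗ 𝟙 1) ∘ u.
    rewrite ptens_assoc_l ptens_id ptens_assoc_r ptens_id.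
    rewrite {1}(ptens_unitr_intro u') {2}(ptens_unitl_intro u) !ptens_comp_merge.
    by rewrite !pcomp_idl !pcomp_idr.
  by rewrite ptens_assoc_l pcomp_assoc ptens_comp_merge hL pcomp_idl ptens_id pcomp_idl.
Qed.

Lemma zigzag_transport (c : W 2 0) (u : W 0 2) (phi psi : W 1 1) :
  zigzag c u -> phi ∘ psi = 𝟙 1 -> psi ∘ phi = 𝟙 1 ->
  zigzag (c ∘ (𝟙 1 ⊗ phi)) ((psi ⊗ 𝟙 1) ∘ u).
Proof.
  rewrite /zigzag /zigzagL /zigzagR => -[hL hR] phiK psiK; split.
  - rewrite ptens_comp_id pcomp_assoc ptens_assoc_r ptens_id interchange_effect.
    rewrite ptens_id_comp -!pcomp_assoc ptens_assoc_l ptens_id interchange_state_l.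
    by rewrite !pcomp_assoc -(pcomp_assoc _ (ptens _ _ (𝟙 1) c)) hL pcomp_idr psiK.
  - rewrite ptens_comp_id ptens_id_comp -!pcomp_assoc (pcomp_assoc (𝟙 1 ⊗ u)).
    by rewrite ptens_assoc_r !ptens_comp_merge phiK !pcomp_idl !ptens_id pcomp_idl.
Qed.

Definition pmonoid (m : W 2 1) (u : W 0 1) :=
  m ∘ (m ⊗ 𝟙 1) = m ∘ (𝟙 1 ⊗ m) /\ m ∘ (u ⊗ 𝟙 1) = 𝟙 1 /\ m ∘ (𝟙 1 ⊗ u) = 𝟙 1.
Definition pcomonoid (d : W 1 2) (e : W 1 0) :=
  (d ⊗ 𝟙 1) ∘ d = (𝟙 1 ⊗ d) ∘ d /\ (e ⊗ 𝟙 1) ∘ d = 𝟙 1 /\ (𝟙 1 ⊗ e) ∘ d = 𝟙 1.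
Definition pfrobenius (m : W 2 1) (u : W 0 1) (d : W 1 2) (e : W 1 0) :=
  pmonoid m u /\ pcomonoid d e
  /\ (𝟙 1 ⊗ m) ∘ (d ⊗ 𝟙 1) = d ∘ m /\ (m ⊗ 𝟙 1) ∘ (𝟙 1 ⊗ d) = d ∘ m.
Definition pfrob_form_mon (m : W 2 1) (be : W 2 0) :=
  be ∘ (m ⊗ 𝟙 1) = be ∘ (𝟙 1 ⊗ m) /\ exists bb, zigzag be bb.
Definition pfrob_form_comon (d : W 1 2) (ga : W 0 2) :=
  (d ⊗ 𝟙 1) ∘ ga = (𝟙 1 ⊗ d) ∘ ga /\ exists c, zigzag c ga.

Section FrobeniusOfForm.
Variables (m : W 2 1) (u : W 0 1) (be : W 2 0) (ga : W 0 2).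
Hypothesis mulA : m ∘ (m ⊗ 𝟙 1) = m ∘ (𝟙 1 ⊗ m).
Hypothesis mul1r : m ∘ (𝟙 1 ⊗ u) = 𝟙 1.
Hypothesis formA : be ∘ (m ⊗ 𝟙 1) = be ∘ (𝟙 1 ⊗ m).
Hypothesis zzL : zigzagL be ga.
Hypothesis zzR : zigzagR be ga.

Definition form_comul := (m ⊗ 𝟙 1) ∘ (𝟙 1 ⊗ ga).
Definition form_counit := be ∘ (𝟙 1 ⊗ u).

Lemma form_comul_central : form_comul = (𝟙 1 ⊗ m) ∘ (ga ⊗ 𝟙 1).
Proof.
  rewrite /form_comul.
  transitivity ((((𝟙 1 ⊗ be) ∘ (ga ⊗ 𝟙 1)) ⊗ 𝟙 1) ∘ ((m ⊗ 𝟙 1) ∘ (𝟙 1 ⊗ ga))).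
    by rewrite zzL ptens_id pcomp_idl.
  have cap_mul : (((𝟙 1 ⊗ be) ∘ (ga ⊗ 𝟙 1)) ⊗ 𝟙 1) ∘ (m ⊗ 𝟙 1) =
      (𝟙 1 ⊗ (be ⊗ 𝟙 1)) ∘ ((𝟙 1 ⊗ (𝟙 1 ⊗ (m ⊗ 𝟙 1))) ∘ (ga ⊗ 𝟙 3)).
    rewrite ptens_comp_id ptens_assoc_r -pcomp_assoc; f_equal.
    rewrite ptens_assoc_r ptens_id ptens_assoc_l ptens_id.
    rewrite {1}(ptens_unitl_intro (m ⊗ 𝟙 1)) !ptens_comp_merge.
    by rewrite !pcomp_idl !pcomp_idr.
  have cups_commute : (ga ⊗ 𝟙 3) ∘ (𝟙 1 ⊗ ga) = (𝟙 1 ⊗ (𝟙 1 ⊗ (𝟙 1 ⊗ ga))) ∘ (ga ⊗ 𝟙 1).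
    rewrite !ptens_assoc_l !ptens_id.
    rewrite (ptens_unitl_intro (𝟙 1 ⊗ ga)) (ptens_unitr_intro (ga ⊗ 𝟙 1)) !ptens_comp_merge.
    by rewrite !pcomp_idl !pcomp_idr ptens_assoc_r.
  have snake_mul : (be ⊗ 𝟙 1) ∘ (𝟙 1 ⊗ (m ⊗ 𝟙 1)) ∘ (𝟙 1 ⊗ (𝟙 1 ⊗ ga)) = m.
    rewrite ptens_assoc_l ptens_comp_merge -formA pcomp_idl ptens_comp_id -pcomp_assoc.
    rewrite ptens_assoc_r ptens_id ptens_assoc_l ptens_id interchange_state pcomp_assoc.
    by rewrite [(be ⊗ 𝟙 1) ∘ _]zzR pcomp_idl.
  rewrite pcomp_assoc cap_mul -!pcomp_assoc cups_commute !pcomp_assoc !ptens_comp_merge.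
  by rewrite !pcomp_idl snake_mul.
Qed.

Lemma form_counit_mul : form_counit ∘ m = be.
Proof.
  rewrite /form_counit; symmetry.
  transitivity (be ∘ (𝟙 1 ⊗ (m ∘ (𝟙 1 ⊗ u)))); first by rewrite mul1r ptens_id pcomp_idr.
  rewrite ptens_id_comp pcomp_assoc -formA ptens_assoc_l ptens_id -!pcomp_assoc.
  by rewrite interchange_state pcomp_assoc.
Qed.

Lemma form_comul_mull : (m ⊗ 𝟙 1) ∘ (𝟙 1 ⊗ form_comul) = form_comul ∘ m.
Proof.
  rewrite /form_comul ptens_id_comp pcomp_assoc ptens_assoc_l ptens_comp_merge pcomp_idl -mulA.
  rewrite ptens_comp_id -pcomp_assoc ptens_assoc_r ptens_id ptens_assoc_l ptens_id.
  by rewrite interchange_state pcomp_assoc.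
Qed.

Lemma form_comul_mulr : (𝟙 1 ⊗ m) ∘ (form_comul ⊗ 𝟙 1) = form_comul ∘ m.
Proof.
  rewrite form_comul_central ptens_comp_id pcomp_assoc ptens_assoc_r ptens_comp_merge pcomp_idl.
  rewrite mulA ptens_id_comp -pcomp_assoc ptens_assoc_l ptens_id ptens_assoc_r ptens_id.
  by rewrite interchange_state_l pcomp_assoc.
Qed.

Lemma form_comul1l : (form_counit ⊗ 𝟙 1) ∘ form_comul = 𝟙 1.
Proof. by rewrite /form_comul pcomp_assoc ptens_comp_merge form_counit_mul pcomp_idl. Qed.

Lemma form_comul1r : (𝟙 1 ⊗ form_counit) ∘ form_comul = 𝟙 1.
Proof. by rewrite form_comul_central pcomp_assoc ptens_comp_merge form_counit_mul pcomp_idl. Qed.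

Lemma form_comul_cup : (form_comul ⊗ 𝟙 1) ∘ ga = (𝟙 1 ⊗ form_comul) ∘ ga.
Proof.
  rewrite {1}form_comul_central /form_comul ptens_comp_id ptens_id_comp -!pcomp_assoc.
  rewrite !ptens_assoc_r ptens_id (ptens_assoc_l (𝟙 1) (𝟙 1) ga) ptens_id.
  by rewrite (states_commute ga ga).
Qed.

Lemma form_comulA : (form_comul ⊗ 𝟙 1) ∘ form_comul = (𝟙 1 ⊗ form_comul) ∘ form_comul.
Proof.
  rewrite {1}/form_comul pcomp_assoc ptens_comp_merge pcomp_idl -form_comul_mull ptens_comp_id.
  rewrite -pcomp_assoc !ptens_assoc_r ptens_id ptens_comp_merge pcomp_idl form_comul_cup.
  rewrite ptens_id_comp (ptens_assoc_l (𝟙 1) (𝟙 1) form_comul) ptens_id.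
  by rewrite {3}/form_comul [X in _ = X]pcomp_assoc interchange -pcomp_assoc.
Qed.

End FrobeniusOfForm.

Lemma pfrobenius_of_form m u be ga :
  pmonoid m u -> be ∘ (m ⊗ 𝟙 1) = be ∘ (𝟙 1 ⊗ m) -> zigzag be ga ->
  pfrobenius m u (form_comul m ga) (form_counit u be).
Proof.
  move=> mon formA [zzL zzR]; have [mulA [_ mul1r]] := mon.
  split; [exact: mon | split; [split; [|split] | split]].
  - exact: form_comulA mulA formA zzL zzR.
  - exact: form_comul1l mul1r formA zzR.
  - exact: form_comul1r mul1r formA zzL zzR.
  - exact: form_comul_mulr mulA formA zzL zzR.
  - exact: form_comul_mull ga mulA.
Qed.

End PROTheory.

Definition op_PRO (W : PRO) : PRO.
Proof.
  refine {| arr := fun a b => W b a;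
            pcomp := fun a b c g f => f ∘ g;
            pid := fun a => 𝟙 a;
            ptens := fun a b c d ac bd p q f g => ptens q p f g |}.
  - by move=> *; rewrite pcomp_assoc.
  - by move=> *; rewrite pcomp_idr.
  - by move=> *; rewrite pcomp_idl.
  - by move=> *; rewrite ptens_id.
  - by move=> *; apply: ptens_comp.
  - by move=> *; apply: ptens_assoc.
  - by move=> *; rewrite ptens_unitl.
  - by move=> *; rewrite ptens_unitr.
Defined.

Lemma cap_unique (W : PRO) (c c' : W 2 0) (u : W 0 2) : zigzagL c' u -> zigzagR c u -> c = c'.
Proof. exact: (@cup_unique (op_PRO W) u c' c). Qed.

Lemma pfrobenius_of_coform (W : PRO) (d : W 1 2) (e : W 1 0) (c : W 2 0) (ga : W 0 2) :
  pcomonoid d e -> (d ⊗ 𝟙 1) ∘ ga = (𝟙 1 ⊗ d) ∘ ga -> zigzag c ga ->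
  pfrobenius ((𝟙 1 ⊗ c) ∘ (d ⊗ 𝟙 1)) ((𝟙 1 ⊗ e) ∘ ga) d e.
Proof.
  move=> comon formA [zzL zzR].
  have [mon [comon' [mulr mull]]] :=
    @pfrobenius_of_form (op_PRO W) d e ga c comon formA (conj zzR zzL).
  by split; [|split; [|split]].
Qed.

Record integral_hopf (W : PRO) (m : W 2 1) (u : W 0 1) (d : W 1 2) (e : W 1 0)
    (s : W 1 1) (Lm : W 0 1) (lm : W 1 0) (sw : W 2 2) : Prop := {
  hopf_mulA : m ∘ (m ⊗ 𝟙 1) = m ∘ (𝟙 1 ⊗ m);
  hopf_mul1l : m ∘ (u ⊗ 𝟙 1) = 𝟙 1;
  hopf_mul1r : m ∘ (𝟙 1 ⊗ u) = 𝟙 1;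
  hopf_comulA : (d ⊗ 𝟙 1) ∘ d = (𝟙 1 ⊗ d) ∘ d;
  hopf_comul1l : (e ⊗ 𝟙 1) ∘ d = 𝟙 1;
  hopf_comul1r : (𝟙 1 ⊗ e) ∘ d = 𝟙 1;
  hopf_comul_mul : d ∘ m = (m ⊗ m) ∘ ((𝟙 1 ⊗ (sw ⊗ 𝟙 1)) ∘ (d ⊗ d));
  hopf_antipodel : m ∘ ((s ⊗ 𝟙 1) ∘ d) = u ∘ e;
  hopf_antipoder : m ∘ ((𝟙 1 ⊗ s) ∘ d) = u ∘ e;
  hopf_cointegral : m ∘ (Lm ⊗ 𝟙 1) = Lm ∘ e;
  hopf_integral : (𝟙 1 ⊗ lm) ∘ d = u ∘ lm;
  hopf_integral_cointegral : lm ∘ Lm = 𝟙 0;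
  sym_cointegral : sw ∘ (Lm ⊗ 𝟙 1) = 𝟙 1 ⊗ Lm;
  sym_integral : (𝟙 1 ⊗ lm) ∘ sw = lm ⊗ 𝟙 1
}.

Section IntegralHopf.
Variables (W : PRO) (m : W 2 1) (u : W 0 1) (d : W 1 2) (e : W 1 0) (s : W 1 1).
Variables (Lm : W 0 1) (lm : W 1 0) (sw : W 2 2).
Hypothesis hH : integral_hopf m u d e s Lm lm sw.

Let mulA := hopf_mulA hH.
Let mul1l := hopf_mul1l hH.
Let mul1r := hopf_mul1r hH.
Let comulA := hopf_comulA hH.
Let comul1l := hopf_comul1l hH.
Let comul1r := hopf_comul1r hH.
Let comul_mul := hopf_comul_mul hH.
Let antipodel := hopf_antipodel hH.
Let antipoder := hopf_antipoder hH.
Let cointegral := hopf_cointegral hH.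
Let integral := hopf_integral hH.
Let integral_cointegral := hopf_integral_cointegral hH.

Definition beta := lm ∘ m.
Definition gamma' := d ∘ Lm.
Definition gamma := (s ⊗ 𝟙 1) ∘ gamma'.
Definition sinv := (𝟙 1 ⊗ beta) ∘ (gamma' ⊗ 𝟙 1).

Lemma unit_beta : u ∘ beta = (m ⊗ beta) ∘ ((𝟙 1 ⊗ (sw ⊗ 𝟙 1)) ∘ (d ⊗ d)).
Proof.
  by rewrite /beta pcomp_assoc -integral -pcomp_assoc comul_mul pcomp_assoc
    ptens_comp_merge pcomp_idl.
Qed.

Lemma beta_cointegral : beta ∘ (Lm ⊗ 𝟙 1) = e.
Proof. by rewrite /beta -pcomp_assoc cointegral pcomp_assoc integral_cointegral pcomp_idl. Qed.

Lemma antipode_sinv_expand :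
  s ∘ sinv = (m ⊗ beta) ∘ ((𝟙 1 ⊗ (sw ⊗ 𝟙 1)) ∘ (((u ⊗ 𝟙 1) ∘ Lm) ⊗ d)).
Proof.
  set L3 := (d ⊗ 𝟙 1) ∘ gamma'.
  have mul_unit_r : s ∘ (𝟙 1 ⊗ beta) = m ∘ ((𝟙 1 ⊗ u) ∘ (s ⊗ beta)).
    rewrite pcomp_assoc mul1r pcomp_idl {1}(ptens_unitr_intro s) ptens_comp_merge.
    by rewrite pcomp_idr pcomp_idl.
  have coprod3 : (𝟙 1 ⊗ (d ⊗ d)) ∘ (gamma' ⊗ 𝟙 1) = L3 ⊗ d.
    by rewrite ptens_assoc_l ptens_comp_merge pcomp_idr /L3 /gamma' pcomp_assoc -comulA
      -pcomp_assoc.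
  have mul_out : (m ∘ (s ⊗ m)) ⊗ beta = m ∘ ((s ⊗ m) ⊗ beta).
    by rewrite -{1}(pcomp_idl beta) ptens_comp_split ptens_unitr.
  have antipode_mul : m ∘ (s ⊗ m) = m ∘ ((m ∘ (s ⊗ 𝟙 1)) ⊗ 𝟙 1).
    rewrite ptens_comp_id pcomp_assoc mulA -pcomp_assoc ptens_assoc_r ptens_comp_merge.
    by rewrite pcomp_idl ptens_id pcomp_idr.
  have antipode_L3 : ((m ∘ (s ⊗ 𝟙 1)) ⊗ 𝟙 3) ∘ (L3 ⊗ d) = ((u ⊗ 𝟙 1) ∘ Lm) ⊗ d.
    rewrite (pid_split _ 1 2) ptens_assoc_l ptens_comp_merge pcomp_idl /L3 pcomp_assoc.
    rewrite ptens_comp_merge pcomp_idl -pcomp_assoc antipodel ptens_comp_id -pcomp_assoc.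
    by rewrite (pcomp_assoc Lm) comul1l pcomp_idl.
  transitivity (((m ∘ (s ⊗ m)) ⊗ beta) ∘ ((𝟙 2 ⊗ (sw ⊗ 𝟙 1)) ∘ (L3 ⊗ d))).
    rewrite /sinv pcomp_assoc mul_unit_r ptens_comp_merge pcomp_idl -pcomp_assoc unit_beta.
    rewrite ptens_split_comp_r ptens_id_comp -!pcomp_assoc coprod3 mul_out.
    rewrite (ptens_assoc_l s m beta) (ptens_assoc_l (𝟙 1) (𝟙 1) (sw ⊗ 𝟙 1)) ptens_id.
    by rewrite -pcomp_assoc.
  rewrite antipode_mul -{1}(pcomp_idr beta) ptens_comp_split -pcomp_assoc ptens_assoc_r.
  rewrite ptens_id (pcomp_assoc (L3 ⊗ d)) interchange_sym -pcomp_assoc.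
  by rewrite antipode_L3.
Qed.

Lemma antipode_sinv : s ∘ sinv = 𝟙 1.
Proof.
  rewrite antipode_sinv_expand -{1}(pcomp_idl d) ptens_comp_split (pcomp_assoc (Lm ⊗ d)).
  rewrite ptens_assoc_r ptens_id interchange_state_l -!pcomp_assoc.
  rewrite (pcomp_assoc ((sw ⊗ 𝟙 1) ∘ (Lm ⊗ d))); cbn [Nat.add].
  rewrite (@pid_split_to _ 1 2 3 stt) ptens_assoc_l ptens_comp_merge mul1l pcomp_idr.
  rewrite (ptens_right_first _ _ Lm d) ptens_unitl (pcomp_assoc d) (pid_split _ 1 1).
  rewrite ptens_assoc_l ptens_comp_merge (sym_cointegral hH) pcomp_idl (pcomp_assoc d).
  by rewrite ptens_assoc_r ptens_comp_merge pcomp_idl beta_cointegral comul1r.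
Qed.

Definition interleave := (𝟙 1 ⊗ (sw ⊗ 𝟙 1)) ∘ (gamma' ⊗ d).

Lemma mul_interleave : (m ⊗ m) ∘ interleave = gamma' ∘ e.
Proof.
  symmetry; rewrite /gamma' -pcomp_assoc -cointegral pcomp_assoc comul_mul -!pcomp_assoc.
  by rewrite ptens_comp_merge pcomp_idr.
Qed.

Lemma interleave_coassoc : (interleave ⊗ 𝟙 1) ∘ d = (𝟙 3 ⊗ d) ∘ interleave.
Proof.
  have comul2 : ((gamma' ⊗ d) ⊗ 𝟙 1) ∘ d = gamma' ⊗ ((𝟙 1 ⊗ d) ∘ d).
    rewrite ptens_assoc_r (ptens_unitl_intro d) ptens_comp_merge pcomp_idr ptens_unitl.
    by rewrite comulA.
  have swap_comul : (𝟙 3 ⊗ d) ∘ (𝟙 1 ⊗ (sw ⊗ 𝟙 1)) = 𝟙 1 ⊗ (sw ⊗ d).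
    rewrite (@pid_split_to _ 1 2 3 stt) ptens_assoc_r ptens_comp_merge pcomp_idl.
    by rewrite ptens_comp_merge pcomp_idl pcomp_idr.
  have comul_swap : (𝟙 1 ⊗ (sw ⊗ 𝟙 2)) ∘ (𝟙 2 ⊗ (𝟙 1 ⊗ d)) = 𝟙 1 ⊗ (sw ⊗ d).
    rewrite {2}(@pid_split_to _ 1 1 2 stt) ptens_assoc_r ptens_comp_merge pcomp_idl.
    by rewrite ptens_assoc_l ptens_id ptens_comp_merge pcomp_idl pcomp_idr.
  rewrite /interleave ptens_comp_id -pcomp_assoc comul2 !ptens_assoc_r ptens_id.
  by rewrite pcomp_assoc swap_comul -comul_swap -pcomp_assoc ptens_comp_merge pcomp_idl.
Qed.

Lemma cointegral_antipode_shift :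
  (𝟙 1 ⊗ (m ∘ (𝟙 1 ⊗ s))) ∘ (gamma' ⊗ 𝟙 1) = (m ⊗ 𝟙 1) ∘ ((𝟙 1 ⊗ sw) ∘ (gamma' ⊗ 𝟙 1)).
Proof.
  set G := m ∘ (𝟙 1 ⊗ s).
  have gamma'_counit : gamma' ⊗ 𝟙 1 = (((m ⊗ m) ∘ interleave) ⊗ 𝟙 1) ∘ d.
    by rewrite mul_interleave [in X in _ = X]ptens_comp_id -pcomp_assoc comul1l pcomp_idr.
  have G_mul : (𝟙 1 ⊗ G) ∘ ((m ⊗ m) ⊗ 𝟙 1) = m ⊗ (m ∘ (𝟙 1 ⊗ G)).
    rewrite ptens_assoc_r ptens_comp_merge pcomp_idl /G -pcomp_assoc interchange pcomp_assoc.
    rewrite mulA -pcomp_assoc; cbn [Nat.add].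
    by rewrite (@pid_split_to _ 1 1 2 stt) ptens_assoc_r ptens_comp_merge pcomp_idl.
  have antipode_cancel : (m ⊗ (m ∘ (𝟙 1 ⊗ G))) ∘ (𝟙 3 ⊗ d) = m ⊗ (𝟙 1 ⊗ e).
    rewrite (@pid_split_to _ 2 1 3 stt) ptens_assoc_r ptens_comp_merge pcomp_idr -pcomp_assoc.
    rewrite ptens_comp_merge pcomp_idl /G -pcomp_assoc antipoder ptens_id_comp pcomp_assoc.
    by rewrite mul1r pcomp_idl.
  have counit_interleave :
      (m ⊗ (𝟙 1 ⊗ e)) ∘ interleave = (m ⊗ 𝟙 1) ∘ ((𝟙 1 ⊗ sw) ∘ (gamma' ⊗ 𝟙 1)).
    rewrite /interleave !ptens_assoc_l pcomp_assoc ptens_comp_merge pcomp_idr.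
    rewrite (ptens_right_first _ _ gamma' d) ptens_unitl; cbn [Nat.add].
    rewrite (@pid_split_to _ 1 1 2 stt) (ptens_assoc_l gamma' (𝟙 1) (𝟙 1)) pcomp_assoc.
    rewrite ptens_comp_merge pcomp_idr ptens_right_first ptens_unitr -pcomp_assoc comul1r.
    by rewrite pcomp_idr -pcomp_assoc.
  rewrite [in X in X = _]gamma'_counit ptens_comp_id -pcomp_assoc.
  rewrite (pcomp_assoc ((interleave ⊗ 𝟙 1) ∘ d)) G_mul interleave_coassoc pcomp_assoc.
  by rewrite antipode_cancel counit_interleave.
Qed.

Lemma sinv_antipode : sinv ∘ s = 𝟙 1.
Proof.
  rewrite /sinv -pcomp_assoc.
  have -> : (gamma' ⊗ 𝟙 1) ∘ s = (𝟙 1 ⊗ (𝟙 1 ⊗ s)) ∘ (gamma' ⊗ 𝟙 1).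
    by rewrite ptens_assoc_l ptens_id interchange_state_l.
  rewrite pcomp_assoc ptens_comp_merge pcomp_idl.
  have -> : beta ∘ (𝟙 1 ⊗ s) = lm ∘ (m ∘ (𝟙 1 ⊗ s)) by rewrite /beta pcomp_assoc.
  rewrite ptens_id_comp -pcomp_assoc cointegral_antipode_shift pcomp_assoc interchange_effect.
  rewrite -pcomp_assoc (pcomp_assoc (gamma' ⊗ 𝟙 1)); cbn [Nat.add].
  rewrite (@pid_split_to _ 1 1 2 stt) ptens_assoc_r ptens_comp_merge pcomp_idl (sym_integral hH).
  rewrite ptens_assoc_l ptens_comp_merge pcomp_idl /gamma' pcomp_assoc integral -pcomp_assoc.
  by rewrite integral_cointegral pcomp_idr mul1l.
Qed.

Lemma zigzagL_beta_gamma : zigzagL beta gamma.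
Proof.
  rewrite /zigzagL -[RHS]antipode_sinv /gamma ptens_comp_id pcomp_assoc ptens_assoc_r.
  by rewrite ptens_id interchange_effect -pcomp_assoc.
Qed.

Lemma betaA : beta ∘ (m ⊗ 𝟙 1) = beta ∘ (𝟙 1 ⊗ m).
Proof. by rewrite /beta -!pcomp_assoc mulA. Qed.

Lemma gamma'A : (d ⊗ 𝟙 1) ∘ gamma' = (𝟙 1 ⊗ d) ∘ gamma'.
Proof. by rewrite /gamma' !pcomp_assoc comulA. Qed.

Lemma sinv_gamma : (sinv ⊗ 𝟙 1) ∘ gamma = gamma'.
Proof.
  by rewrite /gamma pcomp_assoc ptens_comp_merge sinv_antipode pcomp_idl ptens_id pcomp_idl.
Qed.

Lemma zigzag_beta_gammaP : zigzag beta gamma <-> pfrob_form_mon m beta.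
Proof.
  split=> [zz | [_ [bb [_ zzR]]]]; first by split; [exact: betaA | exists gamma].
  have gamma_bb : gamma = bb := cup_unique zzR zigzagL_beta_gamma.
  by split; [exact: zigzagL_beta_gamma | rewrite gamma_bb].
Qed.

Lemma zigzag_gamma'P : (exists c, zigzag c gamma') <-> zigzag beta gamma.
Proof.
  split=> [[c zz] | zz]; last first.
    exists (beta ∘ (𝟙 1 ⊗ s)); rewrite -sinv_gamma.
    exact: zigzag_transport zz antipode_sinv sinv_antipode.
  have [_ zzR] := zigzag_transport zz sinv_antipode antipode_sinv.
  have cap_beta : c ∘ (𝟙 1 ⊗ sinv) = beta := cap_unique zigzagL_beta_gamma zzR.
  by rewrite cap_beta in zzR; split; [exact: zigzagL_beta_gamma | exact: zzR].
Qed.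

Lemma integral_hopf_nondegenerateP :
  (zigzag beta gamma <-> pfrob_form_mon m beta)
  /\ (pfrob_form_mon m beta <-> pfrob_form_comon d gamma')
  /\ (zigzag beta gamma ->
      exists dg eg mr ur, pfrobenius m u dg eg /\ pfrobenius mr ur d e).
Proof.
  split; [exact: zigzag_beta_gammaP | split].
    rewrite -zigzag_beta_gammaP -zigzag_gamma'P.
    by split=> [h | [_ h]]; [split; [exact: gamma'A |] |].
  move=> zz; have [c zz'] := proj2 zigzag_gamma'P zz.
  exists (form_comul m gamma), (form_counit u beta), ((𝟙 1 ⊗ c) ∘ (d ⊗ 𝟙 1)), ((𝟙 1 ⊗ e) ∘ gamma').
  split; first by apply: pfrobenius_of_form => //; exact: betaA.
  by apply: pfrobenius_of_coform => //; exact: gamma'A.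
Qed.

End IntegralHopf.

Section TensorPowers.
Variable C : SSMC.

Definition arrow_heq {A B A' B' : ob C} (f : hom C A B) (g : hom C A' B') : Prop :=
  existT (fun p : ob C * ob C => hom C (fst p) (snd p)) (A, B) f =
  existT (fun p : ob C * ob C => hom C (fst p) (snd p)) (A', B') g.

Lemma arrow_heqP {A B A' B' : ob C} (f : hom C A B) (g : hom C A' B') :
  arrow_heq f g -> exists (e1 : A = A') (e2 : B = B'), castm e1 e2 f = g.
Proof.
  move=> fg; have /= [eA eB] := f_equal (@projT1 _ _) fg; subst A' B'.
  by exists eq_refl, eq_refl; apply: inj_pair2 fg.
Qed.

Lemma arrow_heq_eq {A B : ob C} (f g : hom C A B) : arrow_heq f g -> f = g.
Proof. exact: inj_pair2. Qed.

Lemma arrow_heq_refl {A B : ob C} (f : hom C A B) : arrow_heq f f.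
Proof. by []. Qed.

Lemma arrow_heq_symm {A B A' B'} (f : hom C A B) (g : hom C A' B') :
  arrow_heq f g -> arrow_heq g f.
Proof. by rewrite /arrow_heq => ->. Qed.

Lemma arrow_heq_trans {A B A' B' A'' B''} (f : hom C A B) (g : hom C A' B') (h : hom C A'' B'') :
  arrow_heq f g -> arrow_heq g h -> arrow_heq f h.
Proof. by rewrite /arrow_heq => ->. Qed.

Lemma arrow_heq_castm {A B A' B'} (e1 : A = A') (e2 : B = B') (f : hom C A B) :
  arrow_heq (castm e1 e2 f) f.
Proof. by case: A' / e1; case: B' / e2. Qed.

Lemma arrow_heq_castml {A B A' B' A'' B''} (e1 : A = A') (e2 : B = B') (f : hom C A B)
    (g : hom C A'' B'') :
  arrow_heq f g -> arrow_heq (castm e1 e2 f) g.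
Proof. exact: arrow_heq_trans (arrow_heq_castm _ _ _). Qed.

Lemma arrow_heq_castmr {A B A' B' A'' B''} (e1 : A = A') (e2 : B = B') (f : hom C A B)
    (g : hom C A'' B'') :
  arrow_heq g f -> arrow_heq g (castm e1 e2 f).
Proof. by move=> gf; apply: arrow_heq_trans gf (arrow_heq_symm (arrow_heq_castm _ _ _)). Qed.

Lemma arrow_heq_comp {A B D A' B' D'} (f : hom C A B) (g : hom C B D) (f' : hom C A' B')
    (g' : hom C B' D') :
  arrow_heq f f' -> arrow_heq g g' -> arrow_heq (comp g f) (comp g' f').
Proof.
  move=> /arrow_heqP[eA [eB <-]] /arrow_heqP[eB' [eD <-]]; subst A' B' D'.
  by rewrite (UIP_refl _ _ eB').
Qed.

Lemma arrow_heq_tensm {A B D E A' B' D' E'} (f : hom C A B) (g : hom C D E)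
    (f' : hom C A' B') (g' : hom C D' E') :
  arrow_heq f f' -> arrow_heq g g' -> arrow_heq (tensm f g) (tensm f' g').
Proof. by move=> /arrow_heqP[eA [eB <-]] /arrow_heqP[eD [eE <-]]; subst. Qed.

Lemma arrow_heq_idm {A A'} : A = A' -> arrow_heq (idm A) (idm A').
Proof. by move=> ->. Qed.

Lemma arrow_heq_sym {A B A' B'} : A = A' -> B = B' -> arrow_heq (sym A B) (sym A' B').
Proof. by move=> -> ->. Qed.

Lemma arrow_heq_tensm_assoc {A B D E F G} (f : hom C A B) (g : hom C D E) (h : hom C F G) :
  arrow_heq (tensm (tensm f g) h) (tensm f (tensm g h)).
Proof. by rewrite -tensm_assoc; apply/arrow_heq_symm/arrow_heq_castm. Qed.

Lemma arrow_heq_tensm_unitl {A B} (f : hom C A B) : arrow_heq (tensm (idm unit) f) f.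
Proof. by rewrite -{2}(tensm_unitl _ _ _ f); apply/arrow_heq_symm/arrow_heq_castm. Qed.

Lemma arrow_heq_tensm_unitr {A B} (f : hom C A B) : arrow_heq (tensm f (idm unit)) f.
Proof. by rewrite -{2}(tensm_unitr _ _ _ f); apply/arrow_heq_symm/arrow_heq_castm. Qed.

Lemma arrow_heq_transfer {A B A' B'} {X Y : hom C A B} {X' Y' : hom C A' B'} :
  X = Y -> arrow_heq X X' -> arrow_heq Y Y' -> X' = Y'.
Proof.
  move=> XY XX' YY'; apply: arrow_heq_eq.
  by apply: arrow_heq_trans (arrow_heq_symm XX') _; rewrite XY.
Qed.

Lemma castmK {A B A' B'} (e1 : A = A') (e2 : B = B') (f : hom C A' B') :
  castm e1 e2 (castm (eq_sym e1) (eq_sym e2) f) = f.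
Proof. by case: A' / e1 f; case: B' / e2. Qed.

(* A consequence of the hexagon axiom. *)
Lemma sym_unit_l (H : ob C) : arrow_heq (sym unit H) (idm H).
Proof.
  pose s' := castm (tens_unitl H) (tens_unitr H) (sym unit H) : hom C H H.
  pose r' := castm (tens_unitr H) (tens_unitl H) (sym H unit) : hom C H H.
  have s'_idem : s' = comp s' s'.
    apply: arrow_heq_eq; apply: arrow_heq_castml.
    apply: (arrow_heq_trans (g := sym (tens unit unit) H)).
      exact: arrow_heq_sym (eq_sym (tens_unitl unit)) eq_refl.
    apply: arrow_heq_trans (arrow_heq_symm (arrow_heq_castm (tens_assoc unit unit H) eq_refl _)) _.
    rewrite sym_hex; apply: arrow_heq_castml; apply: arrow_heq_comp.
      exact: arrow_heq_trans (arrow_heq_tensm_unitl _) (arrow_heq_symm (arrow_heq_castm _ _ _)).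
    apply: arrow_heq_castml.
    exact: arrow_heq_trans (arrow_heq_tensm_unitr _) (arrow_heq_symm (arrow_heq_castm _ _ _)).
  have r's' : comp r' s' = idm H.
    apply: arrow_heq_eq.
    apply: arrow_heq_trans (arrow_heq_comp (arrow_heq_castm _ _ _) (arrow_heq_castm _ _ _)) _.
    by rewrite sym_inv; apply: arrow_heq_idm (tens_unitl H).
  have s'_id : s' = idm H.
    by rewrite -r's' {2}s'_idem comp_assoc r's' comp_idl.
  apply: arrow_heq_trans (arrow_heq_symm (arrow_heq_castm (tens_unitl H) (tens_unitr H) _)) _.
  by rewrite -/s' s'_id.
Qed.

Variable H : ob C.

Fixpoint tpow (n : nat) : ob C := match n with 0 => unit | S k => tens H (tpow k) end.

Fixpoint tpow_add (a c : nat) : tens (tpow a) (tpow c) = tpow (a + c) :=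
  match a with
  | 0 => tens_unitl (tpow c)
  | S a' => eq_trans (tens_assoc H (tpow a') (tpow c)) (f_equal (tens H) (tpow_add a' c))
  end.

Definition tpow_addE {a c ac : nat} (p : SEq (a + c) ac) : tens (tpow a) (tpow c) = tpow ac :=
  eq_trans (tpow_add a c) (f_equal tpow (SEq_eq p)).

Definition tarr (a b : nat) := hom C (tpow a) (tpow b).
Definition tcomp {a b c} (g : tarr b c) (f : tarr a b) : tarr a c := comp g f.
Definition tid (a : nat) : tarr a a := idm (tpow a).
Definition ttens {a b c d ac bd} (p : SEq (a + c) ac) (q : SEq (b + d) bd)
    (f : tarr a b) (g : tarr c d) : tarr ac bd :=
  castm (tpow_addE p) (tpow_addE q) (tensm f g).

Ltac ob_eq := simpl; rewrite ?tens_unitl ?tens_unitr ?tens_assoc; reflexivity.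
Ltac arrow_heq_solve := first
  [ apply: arrow_heq_castml; arrow_heq_solve
  | apply: arrow_heq_castmr; arrow_heq_solve
  | apply: arrow_heq_comp; [arrow_heq_solve | arrow_heq_solve]
  | apply: arrow_heq_tensm; [arrow_heq_solve | arrow_heq_solve]
  | apply: arrow_heq_idm; ob_eq
  | apply: arrow_heq_sym; ob_eq
  | apply: arrow_heq_refl ].

Lemma ttens_assoc a b c d e f ac bd ace bdf ce df (x : tarr a b) (y : tarr c d) (z : tarr e f)
    (p1 : SEq (a + c) ac) (q1 : SEq (b + d) bd) (p2 : SEq (ac + e) ace) (q2 : SEq (bd + f) bdf)
    (p3 : SEq (c + e) ce) (q3 : SEq (d + f) df) (p4 : SEq (a + ce) ace) (q4 : SEq (b + df) bdf) :
  ttens p2 q2 (ttens p1 q1 x y) z = ttens p4 q4 x (ttens p3 q3 y z).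
Proof.
  apply: arrow_heq_eq; apply/arrow_heq_castml/arrow_heq_castmr.
  apply: arrow_heq_trans (arrow_heq_tensm (arrow_heq_castm _ _ _) (arrow_heq_refl z)) _.
  apply: arrow_heq_trans (arrow_heq_tensm_assoc _ _ _) _.
  exact: arrow_heq_tensm (arrow_heq_refl x) (arrow_heq_symm (arrow_heq_castm _ _ _)).
Qed.

Lemma ttens_id a c ac (p q : SEq (a + c) ac) : ttens p q (tid a) (tid c) = tid ac.
Proof.
  apply: arrow_heq_eq; apply: arrow_heq_castml.
  by rewrite tensm_id; apply: arrow_heq_idm (tpow_addE p).
Qed.

Lemma ttens_comp a b c a' b' c' ac bd ce (p : SEq (a + a') ac) (q : SEq (c + c') ce)
    (r : SEq (b + b') bd) (f : tarr a b) (g : tarr b c) (f' : tarr a' b') (g' : tarr b' c') :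
  ttens p q (tcomp g f) (tcomp g' f') = tcomp (ttens r q g g') (ttens p r f f').
Proof.
  apply: arrow_heq_eq; apply: arrow_heq_castml; rewrite tensm_comp.
  by apply: arrow_heq_comp; apply/arrow_heq_castmr/arrow_heq_refl.
Qed.

Lemma ttens_unitl a b (p : SEq (0 + a) a) (q : SEq (0 + b) b) (f : tarr a b) :
  ttens p q (tid 0) f = f.
Proof. exact/arrow_heq_eq/arrow_heq_castml/arrow_heq_tensm_unitl. Qed.

Lemma ttens_unitr a b (p : SEq (a + 0) a) (q : SEq (b + 0) b) (f : tarr a b) :
  ttens p q f (tid 0) = f.
Proof. exact/arrow_heq_eq/arrow_heq_castml/arrow_heq_tensm_unitr. Qed.

Definition tensor_PRO : PRO :=
  {| arr := tarr; pcomp := @tcomp; pid := tid; ptens := @ttens;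
     pcomp_assoc := fun a b c d => @comp_assoc C _ _ _ _;
     pcomp_idl := fun a b => @comp_idl C _ _; pcomp_idr := fun a b => @comp_idr C _ _;
     ptens_id := ttens_id; ptens_comp := ttens_comp; ptens_assoc := ttens_assoc;
     ptens_unitl := ttens_unitl; ptens_unitr := ttens_unitr |}.

Definition tpow1 : H = tpow 1 := eq_sym (tens_unitr H).
Definition tpow2 : tens H H = tpow 2 := f_equal (tens H) tpow1.

Definition lift21 (x : hom C (tens H H) H) : tensor_PRO 2 1 := castm tpow2 tpow1 x.
Definition lift12 (x : hom C H (tens H H)) : tensor_PRO 1 2 := castm tpow1 tpow2 x.
Definition lift01 (x : hom C unit H) : tensor_PRO 0 1 := castm eq_refl tpow1 x.
Definition lift10 (x : hom C H unit) : tensor_PRO 1 0 := castm tpow1 eq_refl x.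
Definition lift11 (x : hom C H H) : tensor_PRO 1 1 := castm tpow1 tpow1 x.
Definition lift22 (x : hom C (tens H H) (tens H H)) : tensor_PRO 2 2 := castm tpow2 tpow2 x.
Definition lift20 (x : hom C (tens H H) unit) : tensor_PRO 2 0 := castm tpow2 eq_refl x.
Definition lift02 (x : hom C unit (tens H H)) : tensor_PRO 0 2 := castm eq_refl tpow2 x.

Ltac unfold_lifts :=
  cbv [pcomp ptens pid arr tensor_PRO tcomp ttens tid tarr
       lift21 lift12 lift01 lift10 lift11 lift22 lift20 lift02 mid_swap].
Ltac transfer h := apply: (arrow_heq_transfer h); unfold_lifts; arrow_heq_solve.
Ltac lift_eq := apply: arrow_heq_eq; unfold_lifts; arrow_heq_solve.

Lemma comp_sym_unit B (X : hom C (tens H unit) B) : arrow_heq (comp X (sym unit H)) X.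
Proof.
  apply: arrow_heq_trans
    (arrow_heq_comp (sym_unit_l H) (arrow_heq_symm (arrow_heq_castm (tens_unitr H) eq_refl X))) _.
  by rewrite comp_idr; apply: arrow_heq_castm.
Qed.

Lemma sym_unit_comp A (X : hom C A (tens unit H)) : arrow_heq (comp (sym unit H) X) X.
Proof.
  apply: arrow_heq_trans
    (arrow_heq_comp (arrow_heq_symm (arrow_heq_castm eq_refl (tens_unitl H) X)) (sym_unit_l H)) _.
  by rewrite comp_idl; apply: arrow_heq_castm.
Qed.

Lemma pmonoid_lift (x : hom C (tens H H) H) (y : hom C unit H) :
  is_monoid x y <-> pmonoid (lift21 x) (lift01 y).
Proof.
  split=> -[h1 [h2 h3]].
    by split; [transfer h1 | split; [transfer h2 | transfer h3]].
  by split; [transfer h1 | split; [transfer h2 | transfer h3]].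
Qed.

Lemma pcomonoid_lift (x : hom C H (tens H H)) (y : hom C H unit) :
  is_comonoid x y <-> pcomonoid (lift12 x) (lift10 y).
Proof.
  split=> -[h1 [h2 h3]].
    by split; [transfer h1 | split; [transfer h2 | transfer h3]].
  by split; [transfer h1 | split; [transfer h2 | transfer h3]].
Qed.

Lemma pfrobenius_lift (x : hom C (tens H H) H) (y : hom C unit H) (z : hom C H (tens H H))
    (t : hom C H unit) :
  is_frobenius_algebra x y z t <-> pfrobenius (lift21 x) (lift01 y) (lift12 z) (lift10 t).
Proof.
  rewrite /is_frobenius_algebra /pfrobenius pmonoid_lift pcomonoid_lift.
  split=> -[h1 [h2 [h3 h4]]].
    by split; [| split; [| split; [transfer h3 | transfer h4]]].
  by split; [| split; [| split; [transfer h3 | transfer h4]]].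
Qed.

Lemma zigzag_lift (c : hom C (tens H H) unit) (g : hom C unit (tens H H)) :
  snake c g <-> zigzag (lift20 c) (lift02 g).
Proof.
  split=> -[h1 h2].
    by split; [transfer h1 | transfer h2].
  by split; [transfer h1 | transfer h2].
Qed.

Lemma pfrob_form_mon_lift (x : hom C (tens H H) H) (c : hom C (tens H H) unit) :
  frobenius_form_monoid x c <-> pfrob_form_mon (lift21 x) (lift20 c).
Proof.
  split=> -[formA [g zz]]; split; try by transfer formA.
    by exists (lift02 g); apply/zigzag_lift.
  exists (castm eq_refl (eq_sym tpow2) g).
  by apply/zigzag_lift; rewrite /lift02 castmK.
Qed.

Lemma pfrob_form_comon_lift (x : hom C H (tens H H)) (g : hom C unit (tens H H)) :
  frobenius_form_comonoid x g <-> pfrob_form_comon (lift12 x) (lift02 g).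
Proof.
  split=> -[formA [c zz]]; split; try by transfer formA.
    by exists (lift20 c); apply/zigzag_lift.
  exists (castm (eq_sym tpow2) eq_refl c).
  by apply/zigzag_lift; rewrite /lift20 castmK.
Qed.

Lemma lift_beta (mu : hom C (tens H H) H) (lam : hom C H unit) :
  lift20 (comp lam mu) = beta (lift21 mu) (lift10 lam).
Proof. by lift_eq. Qed.

Lemma lift_gamma' (d : hom C H (tens H H)) (Lam : hom C unit H) :
  lift02 (comp d Lam) = gamma' (lift12 d) (lift01 Lam).
Proof. by lift_eq. Qed.

Lemma lift_gamma (d : hom C H (tens H H)) (s : hom C H H) (Lam : hom C unit H) :
  lift02 (comp (tensm s (idm H)) (comp d Lam)) = gamma (lift12 d) (lift11 s) (lift01 Lam).
Proof. by lift_eq. Qed.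

Lemma integral_hopf_lift (mu : hom C (tens H H) H) (eta : hom C unit H)
    (d : hom C H (tens H H)) (e : hom C H unit) (s : hom C H H)
    (Lam : hom C unit H) (lam : hom C H unit) :
  is_hopf mu eta d e s -> left_cointegral mu e Lam -> right_integral eta d lam ->
  comp lam Lam = idm unit ->
  integral_hopf (lift21 mu) (lift01 eta) (lift12 d) (lift10 e) (lift11 s)
    (lift01 Lam) (lift10 lam) (lift22 (sym H H)).
Proof.
  move=> [mon [comon [comul_mul [_ [_ [_ [antipodel antipoder]]]]]]] coint integ norm.
  have [mulA [mul1l mul1r]] := proj1 (pmonoid_lift mu eta) mon.
  have [comulA [comul1l comul1r]] := proj1 (pcomonoid_lift d e) comon.
  split=> //; try by [transfer comul_mul | transfer antipodel | transfer antipoder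
                     | transfer coint | transfer integ | transfer norm].
  - apply: (arrow_heq_transfer (sym_nat C _ _ _ _ Lam (idm H))).
      by unfold_lifts; arrow_heq_solve.
    by apply: arrow_heq_trans (comp_sym_unit _) _; unfold_lifts; arrow_heq_solve.
  - apply: (arrow_heq_transfer (eq_sym (sym_nat C _ _ _ _ lam (idm H)))).
      by unfold_lifts; arrow_heq_solve.
    by apply: arrow_heq_trans (sym_unit_comp _) _; unfold_lifts; arrow_heq_solve.
Qed.

End TensorPowers.

Theorem mainTheorem3 (C : SSMC) (H : ob C)
  (mu : hom C (tens H H) H) (eta : hom C unit H)
  (d : hom C H (tens H H)) (e : hom C H unit) (s : hom C H H)
  (Lam : hom C unit H) (lam : hom C H unit) :
  is_hopf mu eta d e s ->
  left_cointegral mu e Lam ->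
  right_integral eta d lam ->
  comp lam Lam = idm unit ->
  let beta := comp lam mu in
  let gamma := comp (tensm s (idm H)) (comp d Lam) in
  let gamma' := comp d Lam in
  (snake beta gamma <-> frobenius_form_monoid mu beta)
  /\ (frobenius_form_monoid mu beta <-> frobenius_form_comonoid d gamma')
  /\ (snake beta gamma ->
      exists (d_g : hom C H (tens H H)) (e_g : hom C H unit)
             (mu_r : hom C (tens H H) H) (eta_r : hom C unit H),
        is_pre_hopf_frobenius mu eta d_g e_g mu_r eta_r d e s).
Proof.
  move=> hopf coint integ norm b g g'.
  have [zzP [formP frobP]] :=
    integral_hopf_nondegenerateP (integral_hopf_lift hopf coint integ norm).
  rewrite /b /g /g' zigzag_lift pfrob_form_mon_lift pfrob_form_comon_lift.
  rewrite lift_beta lift_gamma lift_gamma'.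
  split; [exact: zzP | split; [exact: formP |]].
  move=> /frobP [dg [eg [mr [ur [frob_g frob_r]]]]].
  exists (castm (eq_sym (tpow1 H)) (eq_sym (tpow2 H)) dg), (castm (eq_sym (tpow1 H)) eq_refl eg),
    (castm (eq_sym (tpow2 H)) (eq_sym (tpow1 H)) mr), (castm eq_refl (eq_sym (tpow1 H)) ur).
  rewrite /is_pre_hopf_frobenius !pfrobenius_lift /lift12 /lift10 /lift21 /lift01 !castmK.
  by split.
Qed.
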